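(* Let $(\mathcal{A}_\Lambda,\partial_\Lambda)$ and $(\mathcal{A}'_\Lambda,\partial'_\Lambda)$ be filtered Chekanov–Eliashberg DGAs, the former generated by $q_1,\dots,q_n$ with height filtration $h$ and the latter generated by $q_1',\dots,q_n'$ with height filtration $h'$. Let $\sigma:(\mathcal{A}_\Lambda,\partial_\Lambda)\to(\mathcal{A}'_\Lambda,\partial'_\Lambda)$ be the DGA isomorphism defined by $\sigma(q_i)=q_i'$, let $\epsilon$ be an augmentation of $\mathcal{A}_\Lambda$ and use the augmentation $\epsilon\circ\sigma^{-1}$ on $\mathcal{A}'_\Lambda$. If \[ \delta\ \ge\ \max_{1\le i\le n}|h'(\sigma(q_i))-h(q_i)|, \] then $\sigma$ induces a $2\delta$-interleaving of the persistent linearized chain complexes $(A_\Lambda^\bullet,\partial_1^\epsilon)$ and $((A'_\Lambda)^\bullet,(\partial')_1^{\epsilon\circ\sigma^{-1}})$.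
   Context: A filtered Chekanov–Eliashberg DGA is a Chekanov–Eliashberg DGA (free noncommutative graded algebra over $\mathbb{Z}_2$ on generators $q_i$ with differential $\partial$) together with heights $h(q_i)>0$, extended by $h(\text{word})=$ sum of letter heights and $h(\text{sum})=$ max, such that the differential strictly decreases height. An augmentation is an algebra map $\epsilon$ to $\mathbb{Z}_2$ vanishing in nonzero degrees with $\epsilon\circ\partial=0$; $\partial_1^\epsilon$ is the linearized differential (length-one part of $\phi^\epsilon\partial(\phi^\epsilon)^{-1}$, $\phi^\epsilon(q_i)=q_i+\epsilon(q_i)$) on the vector space $A_\Lambda$ spanned by the generators, and $A^t_\Lambda$ is the subcomplex spanned by generators of height $\le t$, with transfer maps the inclusions. Two persistence modules (here of chain complexes) $U^\bullet,V^\bullet$ with transfer maps $u_s^t,v_s^t$ are $2\delta$-interleaved if there are families of maps $\varphi^t:U^t\to V^{t+\delta}$, $\psi^t:V^t\to U^{t+\delta}$ commuting with transfer maps and satisfying $\psi^{t+\delta}\circ\varphi^t=u_t^{t+2\delta}$ and $\varphi^{t+\delta}\circ\psi^t=v_t^{t+2\delta}$. *)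

From HB Require Import structures.
From mathcomp Require Import all_boot all_order all_algebra.
From mathcomp Require Import reals.
Set Implicit Arguments. Unset Strict Implicit. Unset Printing Implicit Defensive.
Import Order.TTheory GRing.Theory Num.Theory.
Local Open Scope ring_scope.

(* Free noncommutative algebra over Z_2 = 'F_2 on generators q_0..q_{n-1}.  *)
(* A word q_{a1}...q_{ak} is a [seq 'I_n] (the empty word is the unit 1).   *)
(* An element of the algebra is represented by a formal sum of words,      *)
(* i.e. a [seq (seq 'I_n)]; its coefficient at a word is the multiplicity  *)
(* mod 2.  All notions below only depend on these coefficients.            *)
Definition word n := seq 'I_n.
Definition poly n := seq (word n).

Definition coef n (p : poly n) (w : word n) : 'F_2 := (count_mem w p)%:R.

Record dga (n : nat) := DGA {
  gdeg : 'I_n -> int;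
  dif  : 'I_n -> poly n }.

Definition wdeg n (D : dga n) (w : word n) : int := \sum_(a <- w) gdeg D a.

(* Extension of the differential to words by the Leibniz rule (no signs
   over Z_2): d(a w') = d(a) w' + a d(w'). *)
Fixpoint dword n (D : dga n) (w : word n) : poly n :=
  match w with
  | [::] => [::]
  | a :: w' => [seq u ++ w' | u <- dif D a] ++ [seq a :: u | u <- dword D w']
  end.

Definition dpoly n (D : dga n) (p : poly n) : poly n := flatten (map (dword D) p).

Definition is_dga n (D : dga n) : Prop :=
  (forall i w, coef (dif D i) w != 0 -> wdeg D w = gdeg D i - 1) /\
  (forall i w, coef (dpoly D (dif D i)) w = 0).

Definition wheight (R : realType) n (h : 'I_n -> R) (w : word n) : R :=
  \sum_(a <- w) h a.

(* Filtered CE DGA: positive heights and d strictly decreases height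
   (h of a sum = max over the words with nonzero coefficient). *)
Definition filtered_dga (R : realType) n (D : dga n) (h : 'I_n -> R) : Prop :=
  is_dga D /\ (forall i, 0 < h i) /\
  (forall i w, coef (dif D i) w != 0 -> wheight h w < h i).

Definition eps_word n (eps : 'I_n -> 'F_2) (w : word n) : 'F_2 :=
  \prod_(a <- w) eps a.
Definition eps_poly n (eps : 'I_n -> 'F_2) (p : poly n) : 'F_2 :=
  \sum_(w <- p) eps_word eps w.

Definition augmentation n (D : dga n) (eps : 'I_n -> 'F_2) : Prop :=
  (forall i, eps i != 0 -> gdeg D i = 0) /\
  (forall i, eps_poly eps (dif D i) = 0).

(* Length-one part of phi^eps(w), phi^eps(q_a) = q_a + eps(q_a), as a row
   vector in the span A_Lambda = 'rV_n of the generators. *)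
Fixpoint lin_word n (eps : 'I_n -> 'F_2) (w : word n) : 'rV['F_2]_n :=
  match w with
  | [::] => 0
  | a :: w' => eps_word eps w' *: delta_mx 0 a + eps a *: lin_word eps w'
  end.

(* Matrix of the linearized differential d_1^eps (row-vector convention:
   d_1^eps(v) = v *m linearized D eps); row i is the length-one part of
   phi^eps d (phi^eps)^{-1} (q_i) = phi^eps (d q_i). *)
Definition linearized n (D : dga n) (eps : 'I_n -> 'F_2) : 'M['F_2]_n :=
  \matrix_(i < n) (\sum_(w <- dif D i) lin_word eps w).

(* A^t_Lambda : span of the generators of height <= t. *)
Definition filt (R : realType) n (h : 'I_n -> R) (t : R) : pred 'rV['F_2]_n :=
  [pred v : 'rV['F_2]_n | [forall j, (t < h j) ==> (v 0 j == 0)]].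

(* A persistence module of chain complexes (U^t)_t presented as the
   subcomplexes filt hU t of ('rV_n, dU), transfer maps = inclusions.
   Families of maps phi^t : U^t -> V^{t+delta} are given by matrices
   (v |-> v *m Phi t) and psi^t : V^t -> U^{t+delta} by Psi t.
   [interleaving ...] says they form a 2 delta-interleaving. *)
Definition chain_family (R : realType) n m (hU : 'I_n -> R) (dU : 'M['F_2]_n)
    (hV : 'I_m -> R) (dV : 'M['F_2]_m) (delta : R) (Phi : R -> 'M['F_2]_(n, m))
  : Prop :=
  (forall t v, v \in filt hU t -> v *m Phi t \in filt hV (t + delta)) /\
  (forall t v, v \in filt hU t -> v *m dU *m Phi t = v *m Phi t *m dV) /\
  (* compatibility with transfer maps: v_{s+d}^{t+d} o phi^s = phi^t o u_s^t *)
  (forall s t v, s <= t -> v \in filt hU s -> v *m Phi s = v *m Phi t).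

Definition interleaving (R : realType) n m (hU : 'I_n -> R) (dU : 'M['F_2]_n)
    (hV : 'I_m -> R) (dV : 'M['F_2]_m) (delta : R)
    (Phi : R -> 'M['F_2]_(n, m)) (Psi : R -> 'M['F_2]_(m, n)) : Prop :=
  chain_family hU dU hV dV delta Phi /\
  chain_family hV dV hU dU delta Psi /\
  (* psi^{t+delta} o phi^t = u_t^{t+2delta} *)
  (forall t v, v \in filt hU t -> v *m Phi t *m Psi (t + delta) = v) /\
  (* phi^{t+delta} o psi^t = v_t^{t+2delta} *)
  (forall t v, v \in filt hV t -> v *m Psi t *m Phi (t + delta) = v).

Definition sigma_poly n (p : poly n) : poly n := p.   (* relabel q_i -> q'_i *)
Definition sigma_mx n : 'M['F_2]_n := 1%:M.            (* q_i |-> q'_i *)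
Definition sigma_inv_mx n : 'M['F_2]_n := 1%:M.        (* q'_i |-> q_i *)

(* sigma is a DGA isomorphism: degree preserving and d' o sigma = sigma o d
   on generators (sigma being bijective on generators, it is an iso). *)
Definition sigma_dga_iso n (D D' : dga n) : Prop :=
  (forall i, gdeg D' i = gdeg D i) /\
  (forall i w, coef (dif D' i) w = coef (sigma_poly (dif D i)) w).

(* eps o sigma^{-1} on the generators q'_i. *)
Definition aug_transport n (eps : 'I_n -> 'F_2) : 'I_n -> 'F_2 := fun i => eps i.

From Pilot Require Import Defs.
From HB Require Import structures.
From mathcomp Require Import all_boot all_order all_algebra.
From mathcomp Require Import reals.
Import Order.TTheory GRing.Theory Num.Theory.
Local Open Scope ring_scope.

(* Since sigma matches the generators and the differentials, the two
   linearized differentials coincide once q_i and q'_i are identified, so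
   sigma and its inverse are chain isomorphisms commuting with all
   inclusions.  Heights change by at most delta under sigma, hence each
   filtration level A^t is carried into (A')^(t + delta) and back, and the
   composites are the identity, i.e. the inclusions A^t -> A^(t + 2 delta). *)

Lemma sumr_count_mem {V : nmodType} {T : eqType} (s p : seq T) (f : T -> V) :
  uniq s -> {subset p <= s} ->
  \sum_(x <- p) f x = \sum_(w <- s) f w *+ count_mem w p.
Proof.
move=> s_uniq sub_ps.
have count_sum w : f w *+ count_mem w p = \sum_(x <- p) (if x == w then f w else 0).
  by rewrite -big_mkcond big_const_seq iter_addr_0.
under [RHS]eq_bigr do rewrite count_sum.
rewrite exchange_big [LHS]big_seq [RHS]big_seq; apply: eq_bigr => x /sub_ps x_s.
rewrite (bigD1_seq x) //= eqxx big1 ?addr0 // => w.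
by rewrite eq_sym => /negPf ->.
Qed.

Lemma sum_eq_coef {n} {V : lmodType 'F_2} (f : word n -> V) (p q : Defs.poly n) :
  coef p =1 coef q -> \sum_(w <- p) f w = \sum_(w <- q) f w.
Proof.
move=> coef_pq; set s := undup (p ++ q).
have s_uniq : uniq s := undup_uniq _.
rewrite (sumr_count_mem _ p f s_uniq) => [|w w_p]; last by rewrite mem_undup mem_cat w_p.
rewrite (sumr_count_mem _ q f s_uniq) => [|w w_q]; last by rewrite mem_undup mem_cat w_q orbT.
by apply: eq_bigr => w _; rewrite -!scaler_nat; congr (_ *: _); apply: coef_pq.
Qed.

Lemma linearized_eq_coef {n} {D D' : dga n} (eps : 'I_n -> 'F_2) :
  (forall i, coef (dif D' i) =1 coef (dif D i)) ->
  linearized D' eps = linearized D eps.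
Proof.
by move=> coef_dif; apply/matrixP => i j; rewrite !mxE (sum_eq_coef _ _ _ (coef_dif i)).
Qed.

Lemma filt_shift (R : realType) n (h h' : 'I_n -> R) (delta t : R) :
  (forall i, h' i <= h i + delta) -> {subset filt h t <= filt h' (t + delta)}.
Proof.
move=> h'_le v; rewrite !inE => /forallP v_filt; apply/forallP => j.
apply/implyP => lt_j; apply: (implyP (v_filt j)).
by rewrite -(ltrD2r delta); apply: lt_le_trans lt_j (h'_le j).
Qed.

Lemma chain_family_id (R : realType) n (hU hV : 'I_n -> R) (d : 'M['F_2]_n)
    (delta : R) :
  (forall i, hV i <= hU i + delta) ->
  chain_family hU d hV d delta (fun _ => 1%:M).
Proof.
move=> hV_le; split; first by move=> t v v_filt; rewrite mulmx1; apply: filt_shift.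
by split=> *; rewrite !mulmx1.
Qed.

Lemma interleaving_id (R : realType) n (h h' : 'I_n -> R) (d : 'M['F_2]_n)
    (delta : R) :
  (forall i, `|h' i - h i| <= delta) ->
  interleaving h d h' d delta (fun _ => 1%:M) (fun _ => 1%:M).
Proof.
move=> h_close.
have h'_le i : h' i <= h i + delta.
  by rewrite -lerBlDl; apply: le_trans (h_close i); apply: ler_norm.
have h_le i : h i <= h' i + delta.
  by rewrite -lerBlDl -opprB; apply: le_trans (h_close i); rewrite -normrN; apply: ler_norm.
split; first exact: chain_family_id.
split; first exact: chain_family_id.
by split=> *; rewrite !mulmx1.
Qed.

Theorem lemma4p3 (R : realType) (n : nat) (D D' : dga n)
  (h h' : 'I_n -> R) (eps : 'I_n -> 'F_2) (delta : R) :
  filtered_dga D h -> filtered_dga D' h' ->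
  sigma_dga_iso D D' ->
  augmentation D eps ->
  (forall i : 'I_n, `|h' i - h i| <= delta) ->
  interleaving h (linearized D eps) h' (linearized D' (aug_transport eps)) delta
    (fun _ => sigma_mx n) (fun _ => sigma_inv_mx n).
Proof.
move=> _ _ [_ dif_sigma] _ h_close.
rewrite (linearized_eq_coef (aug_transport eps) dif_sigma).
exact: interleaving_id.
Qed.
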